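(* The category $\mathbf{StEqSppQu}$ is a reflective full subcategory of $\mathbf{StBasedQu}$.
   Context: For a locale $A$, an $A$-$A$-bimodule is a sup-lattice $M$ with actions $a\triangleright m$, $m\triangleleft a$ preserving joins in each variable, with $1_A\triangleright m=m$, $(a\wedge b)\triangleright m=a\triangleright(b\triangleright m)$, $m\triangleleft1_A=m$, $m\triangleleft(a\wedge b)=(m\triangleleft a)\triangleleft b$, $(a\triangleright m)\triangleleft b=a\triangleright(m\triangleleft b)$. An $A$-$A$-quantale is such a $Q$ with associative join-preserving multiplication and $(a\triangleright x)y=a\triangleright(xy)$, $(x\triangleleft a)y=x(a\triangleright y)$, $(xy)\triangleleft a=x(y\triangleleft a)$; involutive if there is a join-preserving $x\mapsto x^*$ with $x^{**}=x$, $(xy)^*=y^*x^*$, $(a\triangleright(x\triangleleft b))^*=b\triangleright(x^*\triangleleft a)$. A based quantale is an involutive $Q_0$-$Q_0$-quantale $Q$ for some locale $Q_0$. A morphism of based quantales $f:Q\to R$ is a pair $(f_1,f_0)$ with $f_1$ a homomorphism of involutive quantales (join-, multiplication- and involution-preserving) and $f_0:Q_0\to R_0$ a frame homomorphism with $f_1(a\triangleright x)=f_0(a)\triangleright f_1(x)$, $f_1(x\triangleleft a)=f_1(x)\triangleleft f_0(a)$; it is strong if $f_1(1_Q)=1_R$. $\mathbf{StBasedQu}$: based quantales with strong morphisms. A support on $Q$ is a join-preserving $\varsigma:Q\to Q_0$ with $\varsigma(1_Q)=1_{Q_0}$, $\varsigma(x)\triangleright y\le xx^*y$, $\varsigma(x)\triangleright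 x=x$; equivariant if $\varsigma(a\triangleright x)=a\wedge\varsigma(x)$. $\mathbf{StEqSppQu}$: based quantales admitting an equivariant support, with strong morphisms of based quantales commuting with the supports ($f_0\circ\varsigma_Q=\varsigma_R\circ f_1$); it is regarded as a subcategory of $\mathbf{StBasedQu}$ (equivariant supports are unique). *)

Record SupLattice := {
  sl_car :> Type;
  sl_le : sl_car -> sl_car -> Prop;
  sl_sup : (sl_car -> Prop) -> sl_car;
  sl_le_refl : forall x, sl_le x x;
  sl_le_trans : forall x y z, sl_le x y -> sl_le y z -> sl_le x z;
  sl_le_antisym : forall x y, sl_le x y -> sl_le y x -> x = y;
  sl_sup_ub : forall (S : sl_car -> Prop) x, S x -> sl_le x (sl_sup S);
  sl_sup_least : forall (S : sl_car -> Prop) y,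
      (forall x, S x -> sl_le x y) -> sl_le (sl_sup S) y
}.

Arguments sl_le {s} _ _.
Arguments sl_sup {s} _.

Definition sl_top (L : SupLattice) : L := sl_sup (fun _ : L => True).

Definition img {A B : Type} (f : A -> B) (S : A -> Prop) : B -> Prop :=
  fun y => exists x, S x /\ y = f x.

Definition join_preserving {L M : SupLattice} (f : L -> M) : Prop :=
  forall S : L -> Prop, f (sl_sup S) = sl_sup (img f S).

Record Locale := {
  loc_sl :> SupLattice;
  loc_meet : loc_sl -> loc_sl -> loc_sl;
  loc_meet_lb1 : forall a b, sl_le (loc_meet a b) a;
  loc_meet_lb2 : forall a b, sl_le (loc_meet a b) b;
  loc_meet_greatest : forall a b c, sl_le c a -> sl_le c b -> sl_le c (loc_meet a b);
  loc_distr : forall a (S : loc_sl -> Prop),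
      loc_meet a (sl_sup S) = sl_sup (img (loc_meet a) S)
}.

Arguments loc_meet {l} _ _.

Definition frame_hom {A B : Locale} (f : A -> B) : Prop :=
  join_preserving (L := A) (M := B) f /\
  (forall a b, f (loc_meet a b) = loc_meet (f a) (f b)) /\
  f (sl_top A) = sl_top B.

(* A based quantale: an involutive Q0-Q0-quantale Q for a locale Q0.
   lact a x = a |> x ,  ract x a = x <| a . *)
Record BasedQuantale := {
  bq_Q0 : Locale;
  bq_Q : SupLattice;
  lact : bq_Q0 -> bq_Q -> bq_Q;
  ract : bq_Q -> bq_Q0 -> bq_Q;
  qmul : bq_Q -> bq_Q -> bq_Q;
  qinv : bq_Q -> bq_Q;
  lact_join_l : forall (S : bq_Q0 -> Prop) m,
      lact (sl_sup S) m = sl_sup (img (fun a => lact a m) S);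
  lact_join_r : forall a (S : bq_Q -> Prop),
      lact a (sl_sup S) = sl_sup (img (lact a) S);
  ract_join_l : forall (S : bq_Q -> Prop) a,
      ract (sl_sup S) a = sl_sup (img (fun m => ract m a) S);
  ract_join_r : forall m (S : bq_Q0 -> Prop),
      ract m (sl_sup S) = sl_sup (img (ract m) S);
  lact_top : forall m, lact (sl_top bq_Q0) m = m;
  lact_meet : forall a b m, lact (loc_meet a b) m = lact a (lact b m);
  ract_top : forall m, ract m (sl_top bq_Q0) = m;
  ract_meet : forall m a b, ract m (loc_meet a b) = ract (ract m a) b;
  lact_ract : forall a m b, ract (lact a m) b = lact a (ract m b);
  qmul_assoc : forall x y z, qmul (qmul x y) z = qmul x (qmul y z);
  qmul_join_l : forall (S : bq_Q -> Prop) y,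
      qmul (sl_sup S) y = sl_sup (img (fun x => qmul x y) S);
  qmul_join_r : forall x (S : bq_Q -> Prop),
      qmul x (sl_sup S) = sl_sup (img (qmul x) S);
  qmul_lact : forall a x y, qmul (lact a x) y = lact a (qmul x y);
  qmul_ract_lact : forall x a y, qmul (ract x a) y = qmul x (lact a y);
  qmul_ract : forall x y a, ract (qmul x y) a = qmul x (ract y a);
  qinv_join : forall S : bq_Q -> Prop, qinv (sl_sup S) = sl_sup (img qinv S);
  qinv_invol : forall x, qinv (qinv x) = x;
  qinv_mul : forall x y, qinv (qmul x y) = qmul (qinv y) (qinv x);
  qinv_act : forall a x b, qinv (lact a (ract x b)) = lact b (ract (qinv x) a)
}.

Arguments lact {b} _ _ : rename.
Arguments ract {b} _ _ : rename.
Arguments qmul {b} _ _ : rename.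
Arguments qinv {b} _ : rename.

Definition strong_morphism (Q R : BasedQuantale)
    (f1 : bq_Q Q -> bq_Q R) (f0 : bq_Q0 Q -> bq_Q0 R) : Prop :=
  join_preserving f1 /\
  (forall x y, f1 (qmul x y) = qmul (f1 x) (f1 y)) /\
  (forall x, f1 (qinv x) = qinv (f1 x)) /\
  frame_hom f0 /\
  (forall a x, f1 (lact a x) = lact (f0 a) (f1 x)) /\
  (forall x a, f1 (ract x a) = ract (f1 x) (f0 a)) /\
  f1 (sl_top (bq_Q Q)) = sl_top (bq_Q R).

Definition is_support (Q : BasedQuantale) (s : bq_Q Q -> bq_Q0 Q) : Prop :=
  join_preserving (L := bq_Q Q) (M := bq_Q0 Q) s /\
  s (sl_top (bq_Q Q)) = sl_top (bq_Q0 Q) /\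
  (forall x y, sl_le (lact (s x) y) (qmul (qmul x (qinv x)) y)) /\
  (forall x, lact (s x) x = x).

Definition equivariant (Q : BasedQuantale) (s : bq_Q Q -> bq_Q0 Q) : Prop :=
  forall a x, s (lact a x) = loc_meet a (s x).

Definition is_equivariant_support (Q : BasedQuantale) (s : bq_Q Q -> bq_Q0 Q) :=
  is_support Q s /\ equivariant Q s.

Definition has_eq_support (Q : BasedQuantale) : Prop :=
  exists s, is_equivariant_support Q s.

From Stdlib Require Import FunctionalExtensionality PropExtensionality ProofIrrelevance.

(** An equivariant support is recovered from the multiplicative structure:
    [s x |> 1 = x x^* 1] and [s (a |> 1) = a], so any strong morphism, which
    preserves [1], commutes with equivariant supports; this gives fullness.
    For the reflection of [Q], form the terms built from elements of [Q] and
    [Q0] by the based-quantale operations and a formal support, and interpret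
    them along every strong morphism from [Q] into an equivariantly supported
    based quantale.  The reflection consists of the sets of terms closed under
    semantic entailment in all these interpretations: an impredicative
    stand-in for the image of [Q] in their product.  The interpretation of
    closed sets is the factorisation, and it is unique because every closed
    set is the join of its terms and the value of a formal support is forced
    by fullness. *)

Lemma sup_mono {L : SupLattice} (S T : L -> Prop) :
  (forall x, S x -> T x) -> sl_le (sl_sup S) (sl_sup T).
Proof. intros H; apply sl_sup_least; intros x Hx; apply sl_sup_ub; auto. Qed.

Lemma le_top {L : SupLattice} (x : L) : sl_le x (sl_top L).
Proof. apply sl_sup_ub; exact I. Qed.

Lemma join_preserving_mono {L M : SupLattice} (f : L -> M) :
  join_preserving f -> forall x y, sl_le x y -> sl_le (f x) (f y).
Proof.
  intros Hf x y Hxy.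
  assert (Ey : sl_sup (fun z => z = x \/ z = y) = y).
  { apply sl_le_antisym.
    - apply sl_sup_least; intros z [-> | ->]; auto using sl_le_refl.
    - apply sl_sup_ub; auto. }
  rewrite <- Ey, Hf. apply sl_sup_ub. exists x; auto.
Qed.

Lemma img_ext {A B : Type} (f g : A -> B) (S : A -> Prop) :
  (forall x, f x = g x) -> img f S = img g S.
Proof.
  intros H. apply functional_extensionality; intro z.
  apply propositional_extensionality; split; intros [x [Hx ->]]; exists x; rewrite H; auto.
Qed.

Lemma img_comp {A B C : Type} (f : B -> C) (g : A -> B) (S : A -> Prop) :
  img f (img g S) = img (fun x => f (g x)) S.
Proof.
  apply functional_extensionality; intro z. apply propositional_extensionality; split.
  - intros [y [[x [Hx ->]] ->]]. exists x; auto.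
  - intros [x [Hx ->]]. exists (g x). split; auto. exists x; auto.
Qed.

Definition img2 {A B C : Type} (f : A -> B -> C) (S1 : A -> Prop) (S2 : B -> Prop) :
  C -> Prop :=
  fun z => exists x y, S1 x /\ S2 y /\ z = f x y.

Lemma sup_img_hom {T1 T2 : Type} {L1 L2 : SupLattice} (d1 : T1 -> L1) (d2 : T2 -> L2)
  (Op : T1 -> T2) (op : L1 -> L2) :
  join_preserving op -> (forall t, d2 (Op t) = op (d1 t)) ->
  forall P, sl_sup (img d2 (img Op P)) = op (sl_sup (img d1 P)).
Proof.
  intros Hop Hd P. rewrite Hop, !img_comp. f_equal. apply img_ext. auto.
Qed.

Lemma sup_img2_hom {T1 T2 T3 : Type} {L1 L2 L3 : SupLattice}
  (d1 : T1 -> L1) (d2 : T2 -> L2) (d3 : T3 -> L3) (Op : T1 -> T2 -> T3) (op : L1 -> L2 -> L3) :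
  (forall S y, op (sl_sup S) y = sl_sup (img (fun x => op x y) S)) ->
  (forall x S, op x (sl_sup S) = sl_sup (img (op x) S)) ->
  (forall t1 t2, d3 (Op t1 t2) = op (d1 t1) (d2 t2)) ->
  forall P1 P2, sl_sup (img d3 (img2 Op P1 P2)) = op (sl_sup (img d1 P1)) (sl_sup (img d2 P2)).
Proof.
  intros Hl Hr Hd P1 P2. rewrite Hl. apply sl_le_antisym.
  - apply sl_sup_least. intros z [t [[t1 [t2 [H1 [H2 ->]]]] ->]]. rewrite Hd.
    apply sl_le_trans with (op (d1 t1) (sl_sup (img d2 P2))).
    + apply (join_preserving_mono (op (d1 t1)) (Hr (d1 t1))).
      apply sl_sup_ub. exists t2; auto.
    + apply sl_sup_ub. exists (d1 t1). split; auto. exists t1; auto.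
  - apply sl_sup_least. intros z [x [[t1 [H1 ->]] ->]]. rewrite Hr.
    apply sl_sup_least. intros z [y [[t2 [H2 ->]] ->]]. rewrite <- Hd.
    apply sl_sup_ub. exists (Op t1 t2). split; auto. exists t1, t2; auto.
Qed.

Lemma join_preserving_transfer {A B A' B' : SupLattice}
  (DA : A -> A') (DB : B -> B') (f : A -> B) (f' : A' -> B') :
  join_preserving DA -> join_preserving DB -> join_preserving f' ->
  (forall x, DB (f x) = f' (DA x)) ->
  forall F, DB (f (sl_sup F)) = DB (sl_sup (img f F)).
Proof.
  intros HA HB Hf' Hc F. rewrite Hc, HA, Hf', HB, !img_comp.
  f_equal. apply img_ext. intros; symmetry; apply Hc.
Qed.

Lemma meet_top (A : Locale) (a : A) : loc_meet a (sl_top A) = a.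
Proof.
  apply sl_le_antisym.
  - apply loc_meet_lb1.
  - apply loc_meet_greatest; [apply sl_le_refl | apply le_top].
Qed.

Lemma meet_comm (A : Locale) (a b : A) : loc_meet a b = loc_meet b a.
Proof. apply sl_le_antisym; apply loc_meet_greatest; auto using loc_meet_lb1, loc_meet_lb2. Qed.

Lemma meet_sup_l (A : Locale) (S : A -> Prop) (b : A) :
  loc_meet (sl_sup S) b = sl_sup (img (fun a => loc_meet a b) S).
Proof.
  rewrite meet_comm, loc_distr. f_equal. apply img_ext. intros; apply meet_comm.
Qed.

Section EquivariantSupport.

Variables (Q : BasedQuantale) (s : bq_Q Q -> bq_Q0 Q).
Hypothesis s_spec : is_equivariant_support Q s.

Lemma eq_support_lact_top x :
  lact (s x) (sl_top (bq_Q Q)) = qmul (qmul x (qinv x)) (sl_top (bq_Q Q)).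
Proof.
  destruct s_spec as [[_ [_ [s_le s_fix]]] _].
  apply sl_le_antisym; [apply s_le |].
  rewrite <- (s_fix x) at 1. rewrite !qmul_lact.
  apply (join_preserving_mono _ (lact_join_r Q (s x))), le_top.
Qed.

Lemma eq_support_of_lact_top a : s (lact a (sl_top (bq_Q Q))) = a.
Proof.
  destruct s_spec as [[_ [s_top _]] s_eqv]. rewrite s_eqv, s_top. apply meet_top.
Qed.

End EquivariantSupport.

Lemma strong_morphism_eq_support (Q R : BasedQuantale)
  (sQ : bq_Q Q -> bq_Q0 Q) (sR : bq_Q R -> bq_Q0 R)
  (f1 : bq_Q Q -> bq_Q R) (f0 : bq_Q0 Q -> bq_Q0 R) :
  is_equivariant_support Q sQ -> is_equivariant_support R sR ->
  strong_morphism Q R f1 f0 -> forall x, f0 (sQ x) = sR (f1 x).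
Proof.
  intros HQ HR (_ & f_mul & f_inv & _ & f_lact & _ & f_top) x.
  rewrite <- (eq_support_of_lact_top R sR HR (f0 (sQ x))).
  rewrite <- f_top, <- f_lact, (eq_support_lact_top Q sQ HQ), !f_mul, f_inv, f_top.
  rewrite <- (eq_support_lact_top R sR HR). apply eq_support_of_lact_top, HR.
Qed.

Section SemanticClosure.

Context {T Mo : Type} {L : Mo -> SupLattice} (den : forall M : Mo, T -> L M).

Definition den_sup (M : Mo) (P : T -> Prop) : L M := sl_sup (img (den M) P).

Definition sem_closure (P : T -> Prop) : T -> Prop :=
  fun t => forall M, sl_le (den M t) (den_sup M P).

Lemma den_sup_closure P M : den_sup M (sem_closure P) = den_sup M P.
Proof.
  apply sl_le_antisym.
  - apply sl_sup_least. intros z [t [Ht ->]]. apply Ht.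
  - apply sup_mono. intros z [t [Ht ->]]. exists t. split; auto.
    intros M'. apply sl_sup_ub. exists t; auto.
Qed.

Definition closed_set := {P : T -> Prop | forall t, sem_closure P t -> P t}.

Definition close (P : T -> Prop) : closed_set.
Proof.
  exists (sem_closure P). intros t Ht M. rewrite <- (den_sup_closure P M). apply Ht.
Defined.

Definition den_closed (M : Mo) (X : closed_set) : L M := den_sup M (proj1_sig X).

Lemma den_closed_close P M : den_closed M (close P) = den_sup M P.
Proof. apply den_sup_closure. Qed.

Lemma closed_incl_of_den (X Y : closed_set) :
  (forall M, sl_le (den_closed M X) (den_closed M Y)) ->
  forall t, proj1_sig X t -> proj1_sig Y t.
Proof.
  destruct Y as [P HP]; simpl. intros H t Ht. apply HP. intros M.
  apply sl_le_trans with (den_closed M X); [apply sl_sup_ub; exists t; auto | apply H].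
Qed.

Lemma closed_set_eq (X Y : closed_set) :
  (forall t, proj1_sig X t <-> proj1_sig Y t) -> X = Y.
Proof.
  destruct X as [P HP], Y as [P' HP']; simpl. intros H.
  assert (P = P') as <-.
  { apply functional_extensionality; intro t; apply propositional_extensionality, H. }
  f_equal. apply proof_irrelevance.
Qed.

Lemma den_closed_inj (X Y : closed_set) :
  (forall M, den_closed M X = den_closed M Y) -> X = Y.
Proof.
  intros H. apply closed_set_eq; split; apply closed_incl_of_den;
    intros M; rewrite H; apply sl_le_refl.
Qed.

Definition closedSL : SupLattice.
Proof.
  refine {| sl_car := closed_set;
            sl_le := fun X Y => forall t, proj1_sig X t -> proj1_sig Y t;
            sl_sup := fun F => close (fun t => exists X, F X /\ proj1_sig X t) |}.
  - auto.
  - auto.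
  - intros X Y H1 H2. apply closed_set_eq; split; auto.
  - intros F X HX t Ht M. apply sl_sup_ub. exists t. split; auto. exists X; auto.
  - intros F Y H. apply closed_incl_of_den. intros M. rewrite den_closed_close.
    apply sl_sup_least. intros z [t [[X [HX Ht]] ->]].
    apply sl_sup_ub. exists t. split; eauto.
Defined.

Lemma den_closed_sup M (F : closedSL -> Prop) :
  den_closed M (sl_sup F) = sl_sup (img (den_closed M) F).
Proof.
  simpl. rewrite den_closed_close. apply sl_le_antisym.
  - apply sl_sup_least. intros z [t [[X [HX Ht]] ->]].
    apply sl_le_trans with (den_closed M X).
    + apply sl_sup_ub. exists t; auto.
    + apply sl_sup_ub. exists X; auto.
  - apply sl_sup_least. intros z [X [HX ->]]. apply sup_mono.
    intros z [t [Ht ->]]. exists t. split; auto. exists X; auto.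
Qed.

Lemma le_of_den_closed (X Y : closedSL) :
  (forall M, sl_le (den_closed M X) (den_closed M Y)) -> sl_le X Y.
Proof. exact (closed_incl_of_den X Y). Qed.

Lemma den_closed_mono M (X Y : closedSL) :
  sl_le X Y -> sl_le (den_closed M X) (den_closed M Y).
Proof. intros H. apply sup_mono. intros z [t [Ht ->]]. exists t; auto. Qed.

Definition atom (t : T) : closedSL := close (fun u => u = t).

Lemma den_closed_atom M t : den_closed M (atom t) = den M t.
Proof.
  unfold atom. rewrite den_closed_close. apply sl_le_antisym.
  - apply sl_sup_least. intros z [u [-> ->]]. apply sl_le_refl.
  - apply sl_sup_ub. exists t; auto.
Qed.

Lemma closed_sup_atoms (X : closedSL) : X = sl_sup (img atom (proj1_sig X)).
Proof.
  apply den_closed_inj. intros M. rewrite den_closed_sup, img_comp.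
  unfold den_closed at 1, den_sup. f_equal. apply img_ext. intros; symmetry; apply den_closed_atom.
Qed.

End SemanticClosure.

Section Reflection.

Variable Q : BasedQuantale.

Record EqSppArrow := {
  ea_tgt : BasedQuantale;
  ea_supp : bq_Q ea_tgt -> bq_Q0 ea_tgt;
  ea_f1 : bq_Q Q -> bq_Q ea_tgt;
  ea_f0 : bq_Q0 Q -> bq_Q0 ea_tgt;
  ea_supp_spec : is_equivariant_support ea_tgt ea_supp;
  ea_strong : strong_morphism Q ea_tgt ea_f1 ea_f0 }.

Inductive QTerm : Type :=
| QGen : bq_Q Q -> QTerm
| QMul : QTerm -> QTerm -> QTerm
| QInv : QTerm -> QTerm
| QLact : BTerm -> QTerm -> QTerm
| QRact : QTerm -> BTerm -> QTerm
with BTerm : Type :=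
| BGen : bq_Q0 Q -> BTerm
| BSupp : QTerm -> BTerm
| BMeet : BTerm -> BTerm -> BTerm.

Scheme QTerm_mut := Induction for QTerm Sort Prop
  with BTerm_mut := Induction for BTerm Sort Prop.
Combined Scheme term_mut from QTerm_mut, BTerm_mut.

Fixpoint qden (M : EqSppArrow) (t : QTerm) : bq_Q (ea_tgt M) :=
  match t with
  | QGen x => ea_f1 M x
  | QMul t1 t2 => qmul (qden M t1) (qden M t2)
  | QInv t1 => qinv (qden M t1)
  | QLact b t1 => lact (bden M b) (qden M t1)
  | QRact t1 b => ract (qden M t1) (bden M b)
  end
with bden (M : EqSppArrow) (b : BTerm) : loc_sl (bq_Q0 (ea_tgt M)) :=
  match b with
  | BGen a => ea_f0 M a
  | BSupp t => ea_supp M (qden M t)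
  | BMeet b1 b2 => loc_meet (bden M b1) (bden M b2)
  end.

Definition RQ : SupLattice := closedSL (L := fun M => bq_Q (ea_tgt M)) qden.
Definition RB : SupLattice := closedSL (L := fun M => loc_sl (bq_Q0 (ea_tgt M))) bden.

Definition DQ (M : EqSppArrow) (X : RQ) : bq_Q (ea_tgt M) := den_closed qden M X.
Definition DB (M : EqSppArrow) (A : RB) : loc_sl (bq_Q0 (ea_tgt M)) := den_closed bden M A.

Definition Rmul (X Y : RQ) : RQ := close qden (img2 QMul (proj1_sig X) (proj1_sig Y)).
Definition Rinv (X : RQ) : RQ := close qden (img QInv (proj1_sig X)).
Definition Rlact (A : RB) (X : RQ) : RQ := close qden (img2 QLact (proj1_sig A) (proj1_sig X)).
Definition Rract (X : RQ) (A : RB) : RQ := close qden (img2 QRact (proj1_sig X) (proj1_sig A)).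
Definition Rmeet (A B : RB) : RB := close bden (img2 BMeet (proj1_sig A) (proj1_sig B)).
Definition Rsupp (X : RQ) : RB := close bden (img BSupp (proj1_sig X)).
Definition unit1 (x : bq_Q Q) : RQ := atom qden (QGen x).
Definition unit0 (a : bq_Q0 Q) : RB := atom bden (BGen a).

Lemma DQ_inj (X Y : RQ) : (forall M, DQ M X = DQ M Y) -> X = Y.
Proof. exact (den_closed_inj qden X Y). Qed.

Lemma DB_inj (A B : RB) : (forall M, DB M A = DB M B) -> A = B.
Proof. exact (den_closed_inj bden A B). Qed.

Lemma DQ_sup M F : DQ M (sl_sup F) = sl_sup (img (DQ M) F).
Proof. apply (den_closed_sup qden). Qed.

Lemma DB_sup M F : DB M (sl_sup F) = sl_sup (img (DB M) F).
Proof. apply (den_closed_sup bden). Qed.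

Lemma DQ_mul M X Y : DQ M (Rmul X Y) = qmul (DQ M X) (DQ M Y).
Proof.
  unfold DQ, Rmul. rewrite den_closed_close.
  apply sup_img2_hom; [apply qmul_join_l | apply qmul_join_r | reflexivity].
Qed.

Lemma DQ_inv M X : DQ M (Rinv X) = qinv (DQ M X).
Proof.
  unfold DQ, Rinv. rewrite den_closed_close.
  apply sup_img_hom; [intros S; apply qinv_join | reflexivity].
Qed.

Lemma DQ_lact M A X : DQ M (Rlact A X) = lact (DB M A) (DQ M X).
Proof.
  unfold DQ, DB, Rlact. rewrite den_closed_close.
  apply sup_img2_hom; [apply lact_join_l | apply lact_join_r | reflexivity].
Qed.

Lemma DQ_ract M X A : DQ M (Rract X A) = ract (DQ M X) (DB M A).
Proof.
  unfold DQ, DB, Rract. rewrite den_closed_close.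
  apply sup_img2_hom; [apply ract_join_l | apply ract_join_r | reflexivity].
Qed.

Lemma DB_meet M A B : DB M (Rmeet A B) = loc_meet (DB M A) (DB M B).
Proof.
  unfold DB, Rmeet. rewrite den_closed_close.
  apply sup_img2_hom; [apply meet_sup_l | apply loc_distr | reflexivity].
Qed.

Lemma DB_supp M X : DB M (Rsupp X) = ea_supp M (DQ M X).
Proof.
  unfold DQ, DB, Rsupp. rewrite den_closed_close.
  apply sup_img_hom; [apply (ea_supp_spec M) | reflexivity].
Qed.

Lemma DQ_atom M t : DQ M (atom qden t) = qden M t.
Proof. apply (den_closed_atom qden). Qed.

Lemma DB_atom M b : DB M (atom bden b) = bden M b.
Proof. apply (den_closed_atom bden). Qed.

Lemma DQ_unit1 M x : DQ M (unit1 x) = ea_f1 M x.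
Proof. apply DQ_atom. Qed.

Lemma DB_unit0 M a : DB M (unit0 a) = ea_f0 M a.
Proof. apply DB_atom. Qed.

Lemma DQ_top M : DQ M (sl_top RQ) = sl_top (bq_Q (ea_tgt M)).
Proof.
  destruct (ea_strong M) as (_ & _ & _ & _ & _ & _ & f1_top).
  apply sl_le_antisym; [apply le_top |].
  rewrite <- f1_top, <- DQ_unit1. apply (den_closed_mono qden), le_top.
Qed.

Lemma DB_top M : DB M (sl_top RB) = sl_top (bq_Q0 (ea_tgt M)).
Proof.
  destruct (ea_strong M) as (_ & _ & _ & (_ & _ & f0_top) & _).
  apply sl_le_antisym; [apply le_top |].
  rewrite <- f0_top, <- DB_unit0. apply (den_closed_mono bden), le_top.
Qed.

Ltac by_denotations :=
  first [apply DQ_inj | apply DB_inj]; intro M;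
  repeat first [rewrite DQ_mul | rewrite DQ_inv | rewrite DQ_lact | rewrite DQ_ract
               | rewrite DB_meet | rewrite DB_supp | rewrite DQ_top | rewrite DB_top
               | rewrite DQ_atom | rewrite DB_atom].

Definition RLoc : Locale.
Proof.
  refine {| loc_sl := RB; loc_meet := Rmeet |}.
  - intros A B. apply (le_of_den_closed bden). intros M. rewrite DB_meet. apply loc_meet_lb1.
  - intros A B. apply (le_of_den_closed bden). intros M. rewrite DB_meet. apply loc_meet_lb2.
  - intros A B C HA HB. apply (le_of_den_closed bden). intros M. rewrite DB_meet.
    apply loc_meet_greatest; apply (den_closed_mono bden); auto.
  - intros A S. apply DB_inj. intros M.
    apply (join_preserving_transfer (DB M) (DB M) (Rmeet A) (loc_meet (DB M A)));
      [exact (DB_sup M) | exact (DB_sup M) | intros F; apply loc_distr | apply DB_meet].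
Defined.

Definition RBQ : BasedQuantale.
Proof.
  refine {| bq_Q0 := RLoc; bq_Q := RQ; lact := Rlact; ract := Rract;
            qmul := Rmul; qinv := Rinv |}.
  - intros S X. apply DQ_inj. intros M.
    apply (join_preserving_transfer (DB M) (DQ M) (fun A => Rlact A X) (fun a => lact a (DQ M X)));
      [exact (DB_sup M) | exact (DQ_sup M) | intros F; apply lact_join_l | intros; apply DQ_lact].
  - intros A S. apply DQ_inj. intros M.
    apply (join_preserving_transfer (DQ M) (DQ M) (Rlact A) (lact (DB M A)));
      [exact (DQ_sup M) | exact (DQ_sup M) | intros F; apply lact_join_r | intros; apply DQ_lact].
  - intros S A. apply DQ_inj. intros M.
    apply (join_preserving_transfer (DQ M) (DQ M) (fun X => Rract X A) (fun x => ract x (DB M A)));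
      [exact (DQ_sup M) | exact (DQ_sup M) | intros F; apply ract_join_l | intros; apply DQ_ract].
  - intros X S. apply DQ_inj. intros M.
    apply (join_preserving_transfer (DB M) (DQ M) (Rract X) (ract (DQ M X)));
      [exact (DB_sup M) | exact (DQ_sup M) | intros F; apply ract_join_r | intros; apply DQ_ract].
  - intros X; by_denotations. apply lact_top.
  - intros A B X; by_denotations. apply lact_meet.
  - intros X; by_denotations. apply ract_top.
  - intros X A B; by_denotations. apply ract_meet.
  - intros A X B; by_denotations. apply lact_ract.
  - intros X Y Z; by_denotations. apply qmul_assoc.
  - intros S Y. apply DQ_inj. intros M.
    apply (join_preserving_transfer (DQ M) (DQ M) (fun X => Rmul X Y) (fun x => qmul x (DQ M Y)));
      [exact (DQ_sup M) | exact (DQ_sup M) | intros F; apply qmul_join_l | intros; apply DQ_mul].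
  - intros X S. apply DQ_inj. intros M.
    apply (join_preserving_transfer (DQ M) (DQ M) (Rmul X) (qmul (DQ M X)));
      [exact (DQ_sup M) | exact (DQ_sup M) | intros F; apply qmul_join_r | intros; apply DQ_mul].
  - intros A X Y; by_denotations. apply qmul_lact.
  - intros X A Y; by_denotations. apply qmul_ract_lact.
  - intros X Y A; by_denotations. apply qmul_ract.
  - intros S. apply DQ_inj. intros M.
    apply (join_preserving_transfer (DQ M) (DQ M) Rinv qinv);
      [exact (DQ_sup M) | exact (DQ_sup M) | intros F; apply qinv_join | intros; apply DQ_inv].
  - intros X; by_denotations. apply qinv_invol.
  - intros X Y; by_denotations. apply qinv_mul.
  - intros A X B; by_denotations. apply qinv_act.
Defined.


Lemma Rsupp_eq_support : is_equivariant_support RBQ Rsupp.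
Proof.
  split; [split; [| split; [| split]] |].
  - intros S. apply DB_inj. intros M.
    destruct (ea_supp_spec M) as [[s_join _] _].
    apply (join_preserving_transfer (DQ M) (DB M) Rsupp (ea_supp M));
      [exact (DQ_sup M) | exact (DB_sup M) | exact s_join | apply DB_supp].
  - by_denotations. destruct (ea_supp_spec M) as [[_ [s_top _]] _]. exact s_top.
  - intros X Y. apply (le_of_den_closed qden). intros M.
    fold (DQ M). rewrite DQ_lact, DB_supp, !DQ_mul, DQ_inv.
    destruct (ea_supp_spec M) as [[_ [_ [s_le _]]] _]. apply s_le.
  - intros X; by_denotations. destruct (ea_supp_spec M) as [[_ [_ [_ s_fix]]] _]. apply s_fix.
  - intros A X; by_denotations. destruct (ea_supp_spec M) as [_ s_eqv]. apply s_eqv.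
Qed.

Lemma strong_morphism_into_reflection (P : BasedQuantale)
  (g1 : bq_Q P -> RQ) (g0 : bq_Q0 P -> RB) :
  (forall M, strong_morphism P (ea_tgt M) (fun x => DQ M (g1 x)) (fun a => DB M (g0 a))) ->
  strong_morphism P RBQ g1 g0.
Proof.
  intros Hg.
  split; [| split; [| split; [| split; [split; [| split] | split; [| split]]]]].
  - intros S. apply DQ_inj. intros M. destruct (Hg M) as [g_join _].
    rewrite DQ_sup, img_comp. apply g_join.
  - intros x y. apply DQ_inj. intros M. destruct (Hg M) as (_ & g_mul & _).
    rewrite DQ_mul. apply g_mul.
  - intros x. apply DQ_inj. intros M. destruct (Hg M) as (_ & _ & g_inv & _).
    rewrite DQ_inv. apply g_inv.
  - intros S. apply DB_inj. intros M. destruct (Hg M) as (_ & _ & _ & [g0_join _] & _).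
    rewrite DB_sup, img_comp. apply g0_join.
  - intros a b. apply DB_inj. intros M. destruct (Hg M) as (_ & _ & _ & (_ & g0_meet & _) & _).
    rewrite DB_meet. apply g0_meet.
  - apply DB_inj. intros M. destruct (Hg M) as (_ & _ & _ & (_ & _ & g0_top) & _).
    rewrite DB_top. apply g0_top.
  - intros a x. apply DQ_inj. intros M. destruct (Hg M) as (_ & _ & _ & _ & g_lact & _).
    rewrite DQ_lact. apply g_lact.
  - intros x a. apply DQ_inj. intros M. destruct (Hg M) as (_ & _ & _ & _ & _ & g_ract & _).
    rewrite DQ_ract. apply g_ract.
  - apply DQ_inj. intros M. destruct (Hg M) as (_ & _ & _ & _ & _ & _ & g_top).
    rewrite DQ_top. apply g_top.
Qed.

Lemma unit_strong : strong_morphism Q RBQ unit1 unit0.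
Proof.
  apply strong_morphism_into_reflection. intros M.
  replace (fun x => DQ M (unit1 x)) with (ea_f1 M)
    by (extensionality x; symmetry; apply DQ_unit1).
  replace (fun a => DB M (unit0 a)) with (ea_f0 M)
    by (extensionality a; symmetry; apply DB_unit0).
  apply ea_strong.
Qed.

Lemma DQ_strong M : strong_morphism RBQ (ea_tgt M) (DQ M) (DB M).
Proof.
  split; [| split; [| split; [| split; [split; [| split] | split; [| split]]]]].
  - exact (DQ_sup M).
  - apply DQ_mul.
  - apply DQ_inv.
  - exact (DB_sup M).
  - apply DB_meet.
  - apply DB_top.
  - apply DQ_lact.
  - intros x a. apply DQ_ract.
  - apply DQ_top.
Qed.

(* Stated with the operations of [RBQ], not [Rmul] etc., so that the equations
   of a strong morphism out of [RBQ] rewrite them syntactically. *)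
Lemma atom_QMul t1 t2 : atom qden (QMul t1 t2) = @qmul RBQ (atom qden t1) (atom qden t2).
Proof. by_denotations. reflexivity. Qed.

Lemma atom_QInv t : atom qden (QInv t) = @qinv RBQ (atom qden t).
Proof. by_denotations. reflexivity. Qed.

Lemma atom_QLact b t : atom qden (QLact b t) = @lact RBQ (atom bden b) (atom qden t).
Proof. by_denotations. reflexivity. Qed.

Lemma atom_QRact t b : atom qden (QRact t b) = @ract RBQ (atom qden t) (atom bden b).
Proof. by_denotations. reflexivity. Qed.

Lemma atom_BSupp t : atom bden (BSupp t) = Rsupp (atom qden t).
Proof. by_denotations. reflexivity. Qed.

Lemma atom_BMeet b1 b2 :
  atom bden (BMeet b1 b2) = @loc_meet (bq_Q0 RBQ) (atom bden b1) (atom bden b2).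
Proof. by_denotations. reflexivity. Qed.

Lemma reflection_factor_unique M (h1 : RQ -> bq_Q (ea_tgt M)) (h0 : RB -> bq_Q0 (ea_tgt M)) :
  strong_morphism RBQ (ea_tgt M) h1 h0 ->
  (forall x, h1 (unit1 x) = ea_f1 M x) -> (forall a, h0 (unit0 a) = ea_f0 M a) ->
  (forall X, h1 X = DQ M X) /\ (forall A, h0 A = DB M A).
Proof.
  intros Hh h_unit1 h_unit0.
  pose proof Hh as (h_join & h_mul & h_inv & (h0_join & h0_meet & _) & h_lact & h_ract & _).
  assert (h_supp : forall X, h0 (Rsupp X) = ea_supp M (h1 X)).
  { exact (strong_morphism_eq_support _ _ _ _ _ _ Rsupp_eq_support (ea_supp_spec M) Hh). }
  assert (h_atom : (forall t, h1 (atom qden t) = qden M t) /\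
                   (forall b, h0 (atom bden b) = bden M b)).
  { apply term_mut; intros; simpl.
    - apply h_unit1.
    - rewrite atom_QMul, h_mul. congruence.
    - rewrite atom_QInv, h_inv. congruence.
    - rewrite atom_QLact, h_lact. congruence.
    - rewrite atom_QRact, h_ract. congruence.
    - apply h_unit0.
    - rewrite atom_BSupp, h_supp. congruence.
    - rewrite atom_BMeet, h0_meet. congruence. }
  destruct h_atom as [h1_atom h0_atom]. split.
  - intros X. rewrite (closed_sup_atoms qden X), h_join, DQ_sup, !img_comp.
    f_equal. apply img_ext. intros t. rewrite h1_atom, DQ_atom. reflexivity.
  - intros A. rewrite (closed_sup_atoms bden A), h0_join, DB_sup, !img_comp.
    f_equal. apply img_ext. intros b. rewrite h0_atom, DB_atom. reflexivity.
Qed.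

End Reflection.

Theorem corollary3p27 :
  (* full: every strong morphism between objects of StEqSppQu commutes
     with the (equivariant) supports *)
  (forall (Q R : BasedQuantale) (sQ : bq_Q Q -> bq_Q0 Q) (sR : bq_Q R -> bq_Q0 R)
          (f1 : bq_Q Q -> bq_Q R) (f0 : bq_Q0 Q -> bq_Q0 R),
      is_equivariant_support Q sQ -> is_equivariant_support R sR ->
      strong_morphism Q R f1 f0 ->
      forall x, f0 (sQ x) = sR (f1 x))
  /\
  (* reflective: every based quantale has a reflection into StEqSppQu *)
  (forall Q : BasedQuantale,
     exists (R : BasedQuantale) (e1 : bq_Q Q -> bq_Q R) (e0 : bq_Q0 Q -> bq_Q0 R),
       has_eq_support R /\ strong_morphism Q R e1 e0 /\
       forall (S : BasedQuantale) (f1 : bq_Q Q -> bq_Q S) (f0 : bq_Q0 Q -> bq_Q0 S),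
         has_eq_support S -> strong_morphism Q S f1 f0 ->
         exists (g1 : bq_Q R -> bq_Q S) (g0 : bq_Q0 R -> bq_Q0 S),
           strong_morphism R S g1 g0 /\
           (forall x, g1 (e1 x) = f1 x) /\ (forall a, g0 (e0 a) = f0 a) /\
           forall (h1 : bq_Q R -> bq_Q S) (h0 : bq_Q0 R -> bq_Q0 S),
             strong_morphism R S h1 h0 ->
             (forall x, h1 (e1 x) = f1 x) -> (forall a, h0 (e0 a) = f0 a) ->
             (forall y, h1 y = g1 y) /\ (forall b, h0 b = g0 b)).
Proof.
  split; [exact strong_morphism_eq_support |].
  intros Q. exists (RBQ Q), (unit1 Q), (unit0 Q).
  split; [exists (Rsupp Q); apply Rsupp_eq_support |].
  split; [apply unit_strong |].
  intros S f1 f0 [sS sS_spec] f_strong.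
  pose (M := {| ea_tgt := S; ea_supp := sS; ea_f1 := f1; ea_f0 := f0;
                ea_supp_spec := sS_spec; ea_strong := f_strong |}).
  exists (DQ Q M), (DB Q M).
  split; [exact (DQ_strong Q M) |].
  split; [exact (DQ_unit1 Q M) |].
  split; [exact (DB_unit0 Q M) |].
  exact (reflection_factor_unique Q M).
Qed.
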